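(* Let $0\le \alpha\le 1$ and let $f,g$ be infinitely differentiable functions on $(0,\infty)$ (extending to $x=0$) with $f(0)=0$, such that all series below converge absolutely, so that they may be rearranged. For real $\beta$ define the operator $$D_x^{\beta}[h](x)=\sum_{k=0}^{\infty}\frac{\sin[\pi(\beta-k)]}{\pi(\beta-k)}\,\frac{\Gamma(\beta+1)}{\Gamma(k+1)}\,x^{k-\beta}\,\frac{d^k}{dx^k}\big[h(x)-h(0)\big],\qquad x>0,$$ where $\frac{\sin[\pi(\beta-k)]}{\pi(\beta-k)}$ is interpreted as $1$ when $\beta-k=0$. Then for $x>0$, $$D_x^{\alpha}[f(x)\,g(x)]=\sum_{l=0}^{\infty}C_\alpha^l\,g^{(l)}(x)\,D_x^{(\alpha-l)}[f(x)],$$ where $C_\alpha^l=\frac{\Gamma(\alpha+1)}{\Gamma(l+1)\Gamma(\alpha-l+1)}$ is the generalized binomial coefficient (equal to $\alpha(\alpha-1)\cdots(\alpha-l+1)/l!$). In particular, for $\alpha=n\in\mathbb{N}$ the sum terminates at $l=n$ and reduces to the Leibniz rule $\sum_{l=0}^n\binom{n}{l}g^{(l)}f^{(n-l)}=(fg)^{(n)}$.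
   Context: For $0\le\alpha\le1$ the operator $D_x^\alpha$ defined by the series above is the series expansion the paper uses for the Caputo fractional derivative ${}^C D_x^\alpha f(x)=\frac{1}{\Gamma(1-\alpha)}\int_0^x (x-t)^{-\alpha} f'(t)\,dt$, $x>0$; for $\alpha-l$ with $l\ge1$ the same series defines $D_x^{(\alpha-l)}$. The paper adopts the convention of replacing every function $f$ by $f(x)-f(0)$, i.e. functions are taken to vanish at the origin. *)

From Stdlib Require Import Reals Arith Factorial.
From Coquelicot Require Import Coquelicot.
Open Scope R_scope.

Fixpoint poch (z : R) (n : nat) : R :=
  match n with
  | O => z
  | S m => poch z m * (z + INR (S m))
  end.

(* Real Gamma function, via Gauss's limit formula
   Gamma z = lim_{n->oo} n! n^z / (z (z+1) ... (z+n)),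
   valid for every real z that is not a non-positive integer.
   At the poles z = 0,-1,-2,... the sequence is eventually 0 (since / 0 = 0),
   so Gamma takes the value 0 there, i.e. 1/Gamma = 0 at the poles
   (the usual convention making C_alpha^l = 0 for l > alpha integer). *)
Definition Gamma (z : R) : R :=
  real (Lim_seq (fun n => INR (Factorial.fact n) * Rpower (INR n) z / poch z n)).

Definition sinc_pi (z : R) : R :=
  if Req_EM_T z 0 then 1 else sin (PI * z) / (PI * z).

Definition Dterm (beta : R) (h : R -> R) (x : R) (k : nat) : R :=
  sinc_pi (beta - INR k) * (Gamma (beta + 1) / Gamma (INR k + 1))
  * Rpower x (INR k - beta) * Derive_n (fun y => h y - h 0) k x.

Definition Dfrac (beta : R) (h : R -> R) (x : R) : R := Series (Dterm beta h x).

Definition gbinom (a : R) (l : nat) : R :=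
  Gamma (a + 1) / (Gamma (INR l + 1) * Gamma (a - INR l + 1)).

From Stdlib Require Import Reals Factorial Lra Lia Classical.
From Coquelicot Require Import Coquelicot.
Open Scope R_scope.

(* Both sides are rearrangements of one absolutely convergent double series.  Write
   c(beta, k) = sinc(pi (beta - k)) Gamma(beta + 1) / k! for the coefficients of D^beta.  By the
   Leibniz rule the k-th term of D^alpha[f g] is
     sum_(l <= k) C(k, l) c(alpha, k) x^(k - alpha) g^(l) f^(k - l),
   and C_alpha^l c(alpha - l, k - l) = C(k, l) c(alpha, k) turns it into the anti-diagonal sum
     sum_(l <= k) C_alpha^l g^(l) [(k - l)-th term of D^(alpha - l) f];
   Tannery's theorem then lets us sum over l first.  The coefficient identity is a cancellation of
   Gamma(alpha - l + 1) when that value is non-zero; otherwise alpha - l + 1 is a pole, so alpha - k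
   is a negative integer and both sides vanish through the sinc factor.  This needs the Gauss limit
   defining Gamma to exist and be non-zero away from the poles, proved by shifting z by integers from
   (0, 1], where the sequence increases with consecutive ratios at most exp(2/n - 2/(n+1)). *)

(** * Gauss's limit formula for Gamma *)

Definition gauss_seq (z : R) (n : nat) : R :=
  INR (fact n) * Rpower (INR n) z / poch z n.

Lemma Gamma_of_lim (z L : R) : is_lim_seq (gauss_seq z) L -> Gamma z = L.
Proof.
  intros H. unfold Gamma. change (real (Lim_seq (gauss_seq z)) = L).
  now rewrite (is_lim_seq_unique _ _ H).
Qed.

Lemma poch_S (z : R) (n : nat) : poch z (S n) = poch z n * (z + INR (S n)).
Proof. reflexivity. Qed.

Lemma poch_pos (z : R) (n : nat) : 0 < z -> 0 < poch z n.
Proof.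
  intros Hz. induction n as [|n IH]; [exact Hz|].
  rewrite poch_S. pose proof (pos_INR (S n)). apply Rmult_lt_0_compat; lra.
Qed.

Lemma gauss_seq_pos (z : R) (n : nat) : 0 < z -> 0 < gauss_seq z n.
Proof.
  intros Hz. unfold gauss_seq, Rpower.
  pose proof (lt_0_INR _ (lt_O_fact n)). pose proof (exp_pos (z * ln (INR n))).
  pose proof (poch_pos z n Hz).
  apply Rdiv_lt_0_compat; [apply Rmult_lt_0_compat|]; assumption.
Qed.

Lemma poch_shift (w : R) (n : nat) : poch (w + 1) n * w = poch w n * (w + INR n + 1).
Proof.
  induction n as [|n IH]; [simpl; ring|].
  rewrite !poch_S, S_INR.
  transitivity (poch (w + 1) n * w * (w + 1 + (INR n + 1))); [ring|].
  rewrite IH. ring.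
Qed.

Lemma gauss_seq_shift (w : R) (n : nat) : w <> 0 -> (0 < n)%nat -> w + INR n + 1 <> 0 ->
  gauss_seq (w + 1) n = gauss_seq w n * (w * (INR n / (INR n + (w + 1)))).
Proof.
  intros Hw Hn Hd. apply lt_0_INR in Hn. unfold gauss_seq.
  rewrite Rpower_plus, Rpower_1 by exact Hn.
  pose proof (poch_shift w n) as Hs.
  destruct (Req_dec (poch w n) 0) as [H0|H0].
  - rewrite H0, Rmult_0_l in Hs.
    destruct (Rmult_integral _ _ Hs) as [H1|H1]; [|contradiction].
    rewrite H0, H1. unfold Rdiv. rewrite Rinv_0. ring.
  - replace (poch (w + 1) n) with (poch w n * (w + INR n + 1) / w)
      by (rewrite <- Hs; field; exact Hw).
    field. repeat split; try assumption; lra.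
Qed.

Lemma eventually_INR_gt (M : R) : eventually (fun n => M < INR n).
Proof. apply (is_lim_seq_INR (fun y => M < y)). now exists M. Qed.

Lemma is_lim_seq_ratio_INR (c : R) : is_lim_seq (fun n => INR n / (INR n + c)) 1.
Proof.
  assert (Hinv : is_lim_seq (fun n => / INR n) 0).
  { apply (is_lim_seq_inv INR p_infty is_lim_seq_INR). discriminate. }
  assert (H : is_lim_seq (fun n => / (1 + c * / INR n)) (/ (1 + c * 0))).
  { apply (is_lim_seq_inv _ (Finite (1 + c * 0))).
    - apply is_lim_seq_plus'; [apply is_lim_seq_const|].
      apply is_lim_seq_mult'; [apply is_lim_seq_const|exact Hinv].
    - intros E. injection E. lra. }
  replace (/ (1 + c * 0)) with 1 in H by field.
  apply is_lim_seq_ext_loc with (2 := H).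
  generalize (eventually_INR_gt (Rabs c + 1)). apply filter_imp. intros n Hn.
  pose proof (Rle_abs (- c)). rewrite Rabs_Ropp in *. pose proof (Rabs_pos c).
  field. split; lra.
Qed.

Lemma is_lim_seq_gauss_seq_shift (w L : R) : w <> 0 ->
  is_lim_seq (gauss_seq w) L <-> is_lim_seq (gauss_seq (w + 1)) (L * w).
Proof.
  intros Hw. set (c := fun n => w * (INR n / (INR n + (w + 1)))).
  assert (Hc : is_lim_seq c w).
  { replace (Finite w) with (Finite (w * 1)) by (f_equal; ring).
    apply is_lim_seq_mult'; [apply is_lim_seq_const|apply is_lim_seq_ratio_INR]. }
  assert (Hev : eventually (fun n => gauss_seq (w + 1) n = gauss_seq w n * c n /\ c n <> 0)).
  { generalize (eventually_INR_gt (Rabs w + 1)). apply filter_imp. intros n Hn.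
    pose proof (Rle_abs w). pose proof (Rle_abs (- w)). rewrite Rabs_Ropp in *.
    assert (Hn0 : (0 < n)%nat) by (apply INR_lt; simpl; lra).
    split; [apply gauss_seq_shift; auto; lra|].
    unfold c. apply Rmult_integral_contrapositive_currified; [exact Hw|].
    unfold Rdiv. apply Rmult_integral_contrapositive_currified; [|apply Rinv_neq_0_compat]; lra. }
  split; intros H.
  - apply is_lim_seq_ext_loc with (fun n => gauss_seq w n * c n).
    + revert Hev. apply filter_imp. intros n [E _]. now rewrite E.
    + now apply is_lim_seq_mult'.
  - replace (Finite L) with (Finite (L * w / w)) by (f_equal; field; exact Hw).
    apply is_lim_seq_ext_loc with (fun n => gauss_seq (w + 1) n / c n).
    + revert Hev. apply filter_imp. intros n [E Hcn]. rewrite E. field. exact Hcn.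
    + now apply is_lim_seq_div'.
Qed.

Lemma poch_1 (n : nat) : poch 1 n = INR (fact (S n)).
Proof.
  induction n as [|n IH]; [simpl; ring|].
  rewrite poch_S, IH. change (fact (S (S n))) with (S (S n) * fact (S n))%nat.
  rewrite mult_INR, (S_INR (S n)). ring.
Qed.

Lemma is_lim_seq_gauss_seq_nat (k : nat) : is_lim_seq (gauss_seq (INR k + 1)) (INR (fact k)).
Proof.
  induction k as [|k IH].
  - simpl INR. rewrite Rplus_0_l.
    apply is_lim_seq_ext_loc with (2 := is_lim_seq_ratio_INR 1).
    exists 1%nat. intros n Hn. apply le_INR in Hn. simpl in Hn.
    unfold gauss_seq. rewrite Rpower_1, poch_1 by lra.
    change (fact (S n)) with (S n * fact n)%nat. rewrite mult_INR, S_INR.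
    field. split; [apply INR_fact_neq_0|lra].
  - replace (INR (fact (S k))) with (INR (fact k) * (INR k + 1))
      by (change (fact (S k)) with (S k * fact k)%nat; rewrite mult_INR, S_INR; ring).
    rewrite S_INR. pose proof (pos_INR k).
    apply (is_lim_seq_gauss_seq_shift (INR k + 1)); [lra|exact IH].
Qed.

Lemma Gamma_nat (k : nat) : Gamma (INR k + 1) = INR (fact k).
Proof. apply Gamma_of_lim, is_lim_seq_gauss_seq_nat. Qed.

Definition gauss_ratio (w M : R) : R := (M + 1) / (w + M + 1) * exp (w * (ln (M + 1) - ln M)).

Lemma gauss_seq_succ (w : R) (m : nat) : 0 < w -> (0 < m)%nat ->
  gauss_seq w (S m) = gauss_seq w m * gauss_ratio w (INR m).
Proof.
  intros Hw Hm. apply lt_0_INR in Hm. unfold gauss_seq, gauss_ratio, Rpower.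
  rewrite poch_S, S_INR. change (fact (S m)) with (S m * fact m)%nat.
  rewrite mult_INR, S_INR.
  replace (w * (ln (INR m + 1) - ln (INR m))) with (w * ln (INR m + 1) + - (w * ln (INR m)))
    by ring.
  rewrite exp_plus, exp_Ropp.
  pose proof (poch_pos w m Hw). pose proof (exp_pos (w * ln (INR m))).
  field. repeat split; lra.
Qed.

Lemma ln_le_sub_1 (y : R) : 0 < y -> ln y <= y - 1.
Proof. intros Hy. pose proof (exp_ineq1_le (ln y)) as H. rewrite exp_ln in H; lra. Qed.

Lemma ln_succ_sub_bounds (M : R) : 0 < M -> / (M + 1) <= ln (M + 1) - ln M <= / M.
Proof.
  intros HM. split.
  - pose proof (ln_le_sub_1 (M / (M + 1))) as H. rewrite ln_div in H by lra.
    replace (M / (M + 1) - 1) with (- / (M + 1)) in H by (field; lra).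
    assert (0 < M / (M + 1)) by (apply Rdiv_lt_0_compat; lra). lra.
  - pose proof (ln_le_sub_1 ((M + 1) / M)) as H. rewrite ln_div in H by lra.
    replace ((M + 1) / M - 1) with (/ M) in H by (field; lra).
    assert (0 < (M + 1) / M) by (apply Rdiv_lt_0_compat; lra). lra.
Qed.

Lemma exp_le_compat (a b : R) : a <= b -> exp a <= exp b.
Proof. intros [H|H]; [left; now apply exp_increasing|right; now rewrite H]. Qed.

Lemma gauss_ratio_ge_1 (w M : R) : 0 <= w -> 0 < M -> 1 <= gauss_ratio w M.
Proof.
  intros Hw HM. unfold gauss_ratio.
  destruct (ln_succ_sub_bounds M HM) as [Hd _].
  assert (He : 1 + w / (M + 1) <= exp (w * (ln (M + 1) - ln M))).
  { eapply Rle_trans; [|apply exp_ineq1_le]. apply Rplus_le_compat_l.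
    apply Rmult_le_compat_l; assumption. }
  replace 1 with ((M + 1) / (w + M + 1) * (1 + w / (M + 1))) at 1 by (field; lra).
  apply Rmult_le_compat_l; [|exact He].
  left. apply Rdiv_lt_0_compat; lra.
Qed.

Lemma gauss_ratio_le (w M : R) : 0 <= w <= 1 -> 0 < M ->
  gauss_ratio w M <= exp (2 / M - 2 / (M + 1)).
Proof.
  intros Hw HM. unfold gauss_ratio.
  destruct (ln_succ_sub_bounds M HM) as [_ Hd].
  assert (H1 : (M + 1) / (w + M + 1) <= exp (- (w / (w + M + 1)))).
  { eapply Rle_trans; [|apply exp_ineq1_le]. right. field. lra. }
  assert (H2 : exp (w * (ln (M + 1) - ln M)) <= exp (w / M)).
  { apply exp_le_compat. apply Rmult_le_compat_l; lra. }
  eapply Rle_trans.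
  { apply Rmult_le_compat; [left; apply Rdiv_lt_0_compat; lra|left; apply exp_pos|..];
      eassumption. }
  rewrite <- exp_plus. apply exp_le_compat.
  replace (- (w / (w + M + 1)) + w / M) with (w * (w + 1) / (M * (w + M + 1))) by (field; lra).
  replace (2 / M - 2 / (M + 1)) with (2 / (M * (M + 1))) by (field; lra).
  unfold Rdiv. apply Rmult_le_compat; [nra| |nra|].
  - left. apply Rinv_0_lt_compat. nra.
  - apply Rinv_le_contravar; nra.
Qed.

Lemma gauss_seq_cvg_unit (w : R) : 0 < w <= 1 ->
  exists L, 0 < L /\ is_lim_seq (gauss_seq w) L.
Proof.
  intros Hw. set (u := fun n => gauss_seq w (S n)).
  assert (Hpos : forall n, 0 < u n) by (intros n; apply gauss_seq_pos; lra).
  assert (Hsucc : forall n, u (S n) = u n * gauss_ratio w (INR (S n))).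
  { intros n. apply gauss_seq_succ; [lra|lia]. }
  assert (HS : forall n, 0 < INR (S n)) by (intros n; apply lt_0_INR; lia).
  assert (Hincr : forall n, u n <= u (S n)).
  { intros n. rewrite Hsucc. pose proof (Hpos n).
    pose proof (gauss_ratio_ge_1 w (INR (S n)) ltac:(lra) (HS n)). nra. }
  assert (Hbound : forall n, u n <= u 0%nat * exp (2 - 2 / INR (S n))).
  { induction n as [|n IH].
    - replace (2 - 2 / INR 1) with 0 by (simpl; field). rewrite exp_0. lra.
    - rewrite Hsucc. pose proof (Hpos n).
      pose proof (gauss_ratio_ge_1 w (INR (S n)) ltac:(lra) (HS n)).
      pose proof (gauss_ratio_le w (INR (S n)) ltac:(lra) (HS n)).
      eapply Rle_trans; [apply Rmult_le_compat; [lra|lra|exact IH|eassumption]|].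
      rewrite Rmult_assoc, <- exp_plus, (S_INR (S n)). right. do 2 f_equal. ring. }
  assert (Hbound' : forall n, u n <= u 0%nat * exp 2).
  { intros n. eapply Rle_trans; [apply Hbound|].
    apply Rmult_le_compat_l; [left; apply Hpos|]. apply exp_le_compat.
    pose proof (Rdiv_lt_0_compat 2 _ ltac:(lra) (HS n)). lra. }
  destruct (ex_finite_lim_seq_incr u _ Hincr Hbound') as [L HL].
  exists L. split.
  - apply Rlt_le_trans with (u 0%nat); [apply Hpos|].
    apply (is_lim_seq_incr_compare u L HL Hincr (0%nat)).
  - now apply is_lim_seq_incr_1.
Qed.

Lemma gauss_seq_cvg_pos (z : R) : 0 < z -> exists L, 0 < L /\ is_lim_seq (gauss_seq z) L.
Proof.
  intros Hz. destruct (INR_unbounded z) as [n Hn].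
  revert z Hz Hn. induction n as [|n IH]; intros z Hz Hn; [simpl in Hn; lra|].
  destruct (Rle_lt_dec z 1) as [Hz1|Hz1]; [now apply gauss_seq_cvg_unit|].
  destruct (IH (z - 1)) as [L [HL Hlim]]; [lra|rewrite S_INR in Hn; lra|].
  exists (L * (z - 1)). split; [apply Rmult_lt_0_compat; lra|].
  replace z with (z - 1 + 1) at 1 by ring.
  apply (is_lim_seq_gauss_seq_shift (z - 1)); [lra|exact Hlim].
Qed.

Lemma gauss_seq_cvg_nonzero (z : R) : (forall n : nat, z <> - INR n) ->
  exists L, L <> 0 /\ is_lim_seq (gauss_seq z) L.
Proof.
  intros Hpole. destruct (INR_unbounded (- z)) as [n Hn].
  revert z Hpole Hn. induction n as [|n IH]; intros z Hpole Hn.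
  - destruct (gauss_seq_cvg_pos z) as [L [HL Hlim]]; [simpl in Hn; lra|].
    exists L. split; [lra|exact Hlim].
  - destruct (Rtotal_order z 0) as [Hneg|[H0|Hpos]].
    + destruct (IH (z + 1)) as [L [HL Hlim]].
      * intros m E. apply (Hpole (S m)). rewrite S_INR. lra.
      * rewrite S_INR in Hn. lra.
      * exists (L / z). split.
        { unfold Rdiv. apply Rmult_integral_contrapositive_currified; [exact HL|].
          apply Rinv_neq_0_compat. lra. }
        apply (is_lim_seq_gauss_seq_shift z); [lra|].
        replace (L / z * z) with L by (field; lra). exact Hlim.
    + exfalso. apply (Hpole 0%nat). simpl. lra.
    + destruct (gauss_seq_cvg_pos z Hpos) as [L [HL Hlim]].
      exists L. split; [lra|exact Hlim].
Qed.

Lemma Gamma_eq_0 (z : R) : Gamma z = 0 -> exists n : nat, z = - INR n.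
Proof.
  intros HG. apply NNPP. intros Hpole.
  destruct (gauss_seq_cvg_nonzero z) as [L [HL Hlim]].
  - intros n E. apply Hpole. now exists n.
  - apply HL. rewrite <- HG. symmetry. now apply Gamma_of_lim.
Qed.

(** * The Leibniz rule *)

Lemma sum_f_R0_pascal (F G : nat -> R) (k : nat) :
  sum_f_R0 (fun l => Binomial.C k l * (F (S l) * G (k - l)%nat + F l * G (S (k - l)))) k
  = sum_f_R0 (fun l => Binomial.C (S k) l * F l * G (S k - l)%nat) (S k).
Proof.
  destruct k as [|k].
  - simpl. rewrite !C_n_0, C_n_n. ring.
  - rewrite (sum_eq _ (fun l => Binomial.C (S k) l * F (S l) * G (S k - l)%nat
                             + Binomial.C (S k) l * F l * G (S (S k - l))))
      by (intros; ring).
    rewrite plus_sum, (tech5 (fun l => Binomial.C (S k) l * F (S l) * _)).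
    rewrite (decomp_sum (fun l => Binomial.C (S k) l * F l * _) (S k)) by lia.
    rewrite (decomp_sum _ (S (S k))) by lia. simpl pred. rewrite tech5.
    rewrite (sum_eq (fun l => Binomial.C (S (S k)) (S l) * F (S l) * G (S (S k) - S l)%nat)
      (fun l => Binomial.C (S k) l * F (S l) * G (S k - l)%nat
              + Binomial.C (S k) (S l) * F (S l) * G (S (S k - S l)))).
    2:{ intros l Hl. rewrite <- pascal by lia.
        replace (S (S k - S l)) with (S k - l)%nat by lia.
        replace (S (S k) - S l)%nat with (S k - l)%nat by lia. ring. }
    rewrite plus_sum, !C_n_0, !C_n_n, !Nat.sub_diag, !Nat.sub_0_r.
    ring.
Qed.

Lemma is_derive_sum_f_R0 (F : nat -> R -> R) (dF : nat -> R) (n : nat) (y : R) :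
  (forall l, (l <= n)%nat -> is_derive (F l) y (dF l)) ->
  is_derive (fun t => sum_f_R0 (fun l => F l t) n) y (sum_f_R0 dF n).
Proof.
  induction n as [|n IH]; intros HF; simpl; [now apply HF|].
  apply (is_derive_plus (fun t => sum_f_R0 (fun l => F l t) n) (F (S n))).
  - apply IH. intros l Hl. apply HF. lia.
  - now apply HF.
Qed.

Lemma Derive_n_mult (U : R -> Prop) (f g : R -> R) (k : nat) :
  open U ->
  (forall (n : nat) (t : R), U t -> ex_derive_n f n t) ->
  (forall (n : nat) (t : R), U t -> ex_derive_n g n t) ->
  forall y, U y -> Derive_n (fun t => f t * g t) k y
    = sum_f_R0 (fun l => Binomial.C k l * Derive_n f l y * Derive_n g (k - l) y) k.
Proof.
  intros HU Hf Hg. induction k as [|k IH]; intros y Hy.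
  - simpl. rewrite C_n_0. ring.
  - change (Derive_n (fun t => f t * g t) (S k) y)
      with (Derive (Derive_n (fun t => f t * g t) k) y).
    rewrite (Derive_ext_loc _
      (fun t => sum_f_R0 (fun l => Binomial.C k l * Derive_n f l t * Derive_n g (k - l) t) k)).
    2:{ apply (filter_imp U); [intros t Ht; now apply IH|now apply HU]. }
    rewrite <- (sum_f_R0_pascal (fun l => Derive_n f l y) (fun l => Derive_n g l y)).
    apply is_derive_unique, is_derive_sum_f_R0. intros l _.
    auto_derive.
    - split; [apply (Hf (S l) y Hy)|split; [apply (Hg (S (k - l)) y Hy)|exact I]].
    - change (Derive (fun t => Derive_n f l t) y) with (Derive_n f (S l) y).
      change (Derive (fun t => Derive_n g (k - l) t) y) with (Derive_n g (S (k - l)) y).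
      ring.
Qed.

(** * The coefficient identity *)

Lemma sinc_pi_IZR (m : Z) : m <> 0%Z -> sinc_pi (IZR m) = 0.
Proof.
  intros Hm. unfold sinc_pi. destruct (Req_EM_T (IZR m) 0) as [E|E].
  - apply eq_IZR in E. contradiction.
  - rewrite sin_eq_0_1 by (exists m; ring). unfold Rdiv. ring.
Qed.

Definition Dcoef (beta : R) (k : nat) : R :=
  sinc_pi (beta - INR k) * (Gamma (beta + 1) / Gamma (INR k + 1)).

Lemma gbinom_mul_Dcoef (a : R) (k l : nat) : (l <= k)%nat ->
  gbinom a l * Dcoef (a - INR l) (k - l) = Binomial.C k l * Dcoef a k.
Proof.
  intros Hl. unfold gbinom, Dcoef, Binomial.C. rewrite !Gamma_nat.
  rewrite minus_INR by exact Hl.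
  replace (a - INR l - (INR k - INR l)) with (a - INR k) by ring.
  destruct (Req_dec (Gamma (a - INR l + 1)) 0) as [HG|HG].
  - (* a - l + 1 is a pole, so a - k is a negative integer *)
    destruct (Gamma_eq_0 _ HG) as [n Hn].
    replace (a - INR k) with (IZR (- Z.of_nat (S (n + (k - l))))).
    + rewrite sinc_pi_IZR by lia. ring.
    + rewrite opp_IZR, <- INR_IZR_INZ, S_INR, plus_INR, minus_INR by exact Hl. lra.
  - pose proof (INR_fact_neq_0 l). pose proof (INR_fact_neq_0 k).
    pose proof (INR_fact_neq_0 (k - l)).
    field. repeat split; assumption.
Qed.

Lemma Dterm_Dcoef (beta : R) (h : R -> R) (x : R) (k : nat) :
  Dterm beta h x k = Dcoef beta k * Rpower x (INR k - beta) * Derive_n (fun y => h y - h 0) k x.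
Proof. reflexivity. Qed.

Lemma Dterm_mult (beta : R) (f g : R -> R) (x : R) (k : nat) :
  (forall (n : nat) (y : R), 0 < y -> ex_derive_n f n y) ->
  (forall (n : nat) (y : R), 0 < y -> ex_derive_n g n y) ->
  f 0 = 0 -> 0 < x ->
  Dterm beta (fun y => f y * g y) x k
  = sum_f_R0 (fun l => gbinom beta l * Derive_n g l x * Dterm (beta - INR l) f x (k - l)) k.
Proof.
  intros Hf Hg Hf0 Hx.
  rewrite Dterm_Dcoef, Hf0, Rmult_0_l.
  rewrite (Derive_n_ext (fun y => f y * g y - 0) (fun y => g y * f y)) by (intros y; ring).
  rewrite (Derive_n_mult (fun y => 0 < y) g f k (open_gt 0) Hg Hf x Hx), scal_sum.
  apply sum_eq. intros l Hl.
  rewrite Dterm_Dcoef, Hf0, (Derive_n_ext (fun y => f y - 0) f) by (intros y; ring).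
  rewrite minus_INR by exact Hl.
  replace (INR k - INR l - (beta - INR l)) with (INR k - beta) by ring.
  transitivity (Derive_n g l x * Derive_n f (k - l) x * Rpower x (INR k - beta)
                * (Binomial.C k l * Dcoef beta k)); [ring|].
  rewrite <- (gbinom_mul_Dcoef beta k l Hl). ring.
Qed.

(** * Tannery's theorem and double series *)

Lemma is_series_sum_f_R0 (a : nat -> R) (s : R) :
  is_series a s <-> is_lim_seq (sum_f_R0 a) s.
Proof.
  split; intros H.
  - apply is_lim_seq_ext with (sum_n a); [apply sum_n_Reals|exact H].
  - apply is_lim_seq_ext with (v := sum_n a) in H; [exact H|].
    intros n. symmetry. apply sum_n_Reals.
Qed.

Lemma is_lim_seq_sum_f_R0 (u : nat -> nat -> R) (a : nat -> R) (L : nat) :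
  (forall l, (l <= L)%nat -> is_lim_seq (fun N => u N l) (a l)) ->
  is_lim_seq (fun N => sum_f_R0 (u N) L) (sum_f_R0 a L).
Proof.
  induction L as [|L IH]; intros Hu; simpl; [now apply Hu|].
  apply is_lim_seq_plus'; [apply IH; intros l Hl|]; apply Hu; lia.
Qed.

Lemma tannery_0 (u : nat -> nat -> R) (M : nat -> R) :
  ex_series M -> (forall N l, Rabs (u N l) <= M l) ->
  (forall l, is_lim_seq (fun N => u N l) 0) ->
  is_lim_seq (fun N => sum_f_R0 (u N) N) 0.
Proof.
  intros HM Hdom Hu. apply is_lim_seq_spec. intros eps.
  assert (HM0 : forall l, 0 <= M l).
  { intros l. apply Rle_trans with (Rabs (u 0%nat l)); [apply Rabs_pos|apply Hdom]. }
  assert (Hsum : is_lim_seq (sum_f_R0 M) (Series M)).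
  { apply is_series_sum_f_R0, Series_correct, HM. }
  assert (Hpartial : forall N, sum_f_R0 M N <= Series M).
  { intros N. apply sum_incr; [now apply is_lim_seq_Reals|exact HM0]. }
  apply is_lim_seq_spec in Hsum. destruct (Hsum (pos_div_2 eps)) as [L HL].
  assert (Hhead : is_lim_seq (fun N => sum_f_R0 (u N) L) 0).
  { rewrite <- (sum_eq_R0 (fun _ => 0) L) by reflexivity.
    now apply is_lim_seq_sum_f_R0. }
  apply is_lim_seq_spec in Hhead.
  assert (Hbig : eventually (fun N => (S L <= N)%nat)) by (exists (S L); auto).
  generalize (filter_and _ _ (Hhead (pos_div_2 eps)) Hbig). apply filter_imp.
  intros N [Hhead_N HLN]. rewrite Rminus_0_r in *.
  assert (Htail : Rabs (sum_f_R0 (fun i => u N (S L + i)%nat) (N - S L))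
                  <= sum_f_R0 M N - sum_f_R0 M L).
  { rewrite (tech2 M L N) by lia. eapply Rle_trans; [apply Rsum_abs|].
    apply Rle_trans with (sum_f_R0 (fun i => M (S L + i)%nat) (N - S L)); [|right; ring].
    apply sum_Rle. intros i _. apply Hdom. }
  specialize (HL L (le_n L)). apply Rabs_def2 in HL. pose proof (Hpartial N).
  rewrite (tech2 (u N) L N) by lia.
  eapply Rle_lt_trans; [apply Rabs_triang|]. simpl in *. lra.
Qed.

Lemma tannery (u : nat -> nat -> R) (M a : nat -> R) :
  ex_series M -> (forall N l, Rabs (u N l) <= M l) ->
  (forall l, is_lim_seq (fun N => u N l) (a l)) ->
  is_lim_seq (fun N => sum_f_R0 (u N) N) (Series a).
Proof.
  intros HM Hdom Hu.
  assert (Ha : forall l, Rabs (a l) <= M l).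
  { intros l. change (Rbar_le (Rabs (a l)) (M l)).
    apply (is_lim_seq_le (fun N => Rabs (u N l)) (fun _ => M l)).
    - intros N. apply Hdom.
    - apply (is_lim_seq_abs _ (a l)), Hu.
    - apply is_lim_seq_const. }
  assert (Hv : is_lim_seq (fun N => sum_f_R0 (fun l => u N l - a l) N) 0).
  { apply (tannery_0 _ (fun l => 2 * M l)).
    - apply (ex_series_scal_l 2 M), HM.
    - intros N l. unfold Rminus. eapply Rle_trans; [apply Rabs_triang|].
      rewrite Rabs_Ropp. pose proof (Hdom N l). pose proof (Ha l). lra.
    - intros l. replace 0 with (a l - a l) by ring.
      apply is_lim_seq_minus'; [apply Hu|apply is_lim_seq_const]. }
  assert (Hsa : is_lim_seq (sum_f_R0 a) (Series a)).
  { apply is_series_sum_f_R0, Series_correct, (ex_series_le a M Ha HM). }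
  replace (Series a) with (0 + Series a) by ring.
  apply is_lim_seq_ext with (fun N => sum_f_R0 (fun l => u N l - a l) N + sum_f_R0 a N).
  - intros N. rewrite minus_sum. ring.
  - now apply is_lim_seq_plus'.
Qed.

Lemma sum_f_R0_diagonal (T : nat -> nat -> R) (N : nat) :
  sum_f_R0 (fun k => sum_f_R0 (fun l => T l (k - l)%nat) k) N
  = sum_f_R0 (fun l => sum_f_R0 (T l) (N - l)) N.
Proof.
  induction N as [|N IH]; [reflexivity|].
  rewrite tech5, IH, !tech5, Nat.sub_diag.
  rewrite (sum_eq (fun l => sum_f_R0 (T l) (S N - l))
                  (fun l => sum_f_R0 (T l) (N - l) + T l (S N - l)%nat)).
  - rewrite plus_sum. simpl. ring.
  - intros l Hl. replace (S N - l)%nat with (S (N - l)) by lia. apply tech5.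
Qed.

Lemma is_series_diagonal (T : nat -> nat -> R) :
  (forall l, ex_series (fun m => Rabs (T l m))) ->
  ex_series (fun l => Series (fun m => Rabs (T l m))) ->
  is_series (fun k => sum_f_R0 (fun l => T l (k - l)%nat) k) (Series (fun l => Series (T l))).
Proof.
  intros HT HA. apply is_series_sum_f_R0.
  apply is_lim_seq_ext with (fun N => sum_f_R0 (fun l => sum_f_R0 (T l) (N - l)) N).
  { intros N. symmetry. apply sum_f_R0_diagonal. }
  apply (tannery (fun N l => sum_f_R0 (T l) (N - l)) _ _ HA).
  - intros N l. eapply Rle_trans; [apply Rsum_abs|].
    apply sum_incr; [|intros; apply Rabs_pos].
    apply is_lim_seq_Reals, is_series_sum_f_R0, Series_correct, HT.
  - intros l. apply (is_lim_seq_incr_n _ l).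
    apply is_lim_seq_ext with (sum_f_R0 (T l)); [intros N; now rewrite Nat.add_sub|].
    apply is_series_sum_f_R0, Series_correct, ex_series_Rabs, HT.
Qed.

Theorem mainTheorem1 (alpha : R) (f g : R -> R) (x : R) :
  0 <= alpha <= 1 ->
  (* f, g infinitely differentiable on (0, oo) *)
  (forall (n : nat) (y : R), 0 < y -> ex_derive_n f n y) ->
  (forall (n : nat) (y : R), 0 < y -> ex_derive_n g n y) ->
  (* f, g extend (continuously) to x = 0 *)
  filterlim f (at_right 0) (locally (f 0)) ->
  filterlim g (at_right 0) (locally (g 0)) ->
  f 0 = 0 ->
  0 < x ->
  (* absolute convergence of the series involved *)
  ex_series (fun k => Rabs (Dterm alpha (fun y => f y * g y) x k)) ->
  (forall l : nat, ex_series (fun k => Rabs (Dterm (alpha - INR l) f x k))) ->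
  ex_series (fun l => Rabs (gbinom alpha l * Derive_n g l x
                             * Dfrac (alpha - INR l) f x)) ->
  (* absolute convergence of the double series, allowing rearrangement *)
  ex_series (fun l => Series (fun m => Rabs (gbinom alpha l * Derive_n g l x
                                              * Dterm (alpha - INR l) f x m))) ->
  Dfrac alpha (fun y => f y * g y) x
  = Series (fun l => gbinom alpha l * Derive_n g l x * Dfrac (alpha - INR l) f x).
Proof.
  intros _ Hf Hg _ _ Hf0 Hx _ Hterm _ Hdouble.
  set (T := fun l m => gbinom alpha l * Derive_n g l x * Dterm (alpha - INR l) f x m).
  assert (HT : forall l, ex_series (fun m => Rabs (T l m))).
  { intros l. apply ex_series_ext with (fun m => Rabs (gbinom alpha l * Derive_n g l x)
                                                * Rabs (Dterm (alpha - INR l) f x m)).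
    - intros m. symmetry. apply Rabs_mult.
    - exact (ex_series_scal_l (V := R_NormedModule) _ _ (Hterm l)). }
  unfold Dfrac at 1.
  rewrite (Series_ext _ (fun k => sum_f_R0 (fun l => T l (k - l)%nat) k))
    by (intros k; now apply Dterm_mult).
  rewrite (is_series_unique _ _ (is_series_diagonal T HT Hdouble)).
  apply Series_ext. intros l. apply Series_scal_l.
Qed.
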